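(* Let $\{\lambda_n\}_{n\geq 1}$ be i.i.d. random variables, each uniformly distributed on the interval $(3.87,4)$, and let $X_0$ be a $(0,1)$-valued random variable independent of the $\lambda_n$'s. Define the Markov process $X_{n+1}=\lambda_{n+1}X_n(1-X_n)$ for $n\geq 0$, and let $p^n(x,B)=\mathrm{Prob}(X_n\in B\mid X_0=x)$ denote its $n$-step transition probabilities. Let $A$ be a nonempty open subset of $(0,1)$. Then for every $x\in(0,1)$ there exists a positive integer $M$ such that $p^M(x,A)=\mathrm{Prob}(X_M\in A\mid X_0=x)>0$.
   Context: The one-step transition probability is $p(x,B)=\mathrm{Prob}(\lambda_1 x(1-x)\in B)$ for Borel $B\subset(0,1)$, and $p^n$ is the $n$-step transition probability of the Markov chain. *)

From HB Require Import structures.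
From mathcomp Require Import all_boot all_order all_algebra.
From mathcomp Require Import all_classical all_reals all_analysis.
From mathcomp Require Import uniform_distribution.
Set Implicit Arguments. Unset Strict Implicit. Unset Printing Implicit Defensive.
Import Order.TTheory GRing.Theory Num.Theory.
Local Open Scope classical_set_scope.
Local Open Scope ring_scope.

Definition lam_lo {R : realType} : R := 387 / 100.
Definition lam_hi {R : realType} : R := 4.

Lemma lam_lo_lt_hi (R : realType) : (lam_lo : R) < lam_hi.
Proof.
rewrite /lam_lo /lam_hi ltr_pdivrMr //; by rewrite -natrM ltr_nat.
Qed.

(* Law of lambda_n : uniform probability on [3.87, 4]
   (the endpoints are Lebesgue-null, so this is the same as on (3.87,4)). *)
Definition lam_law (R : realType) := uniform_prob (lam_lo_lt_hi R).

Definition logistic {R : realType} (l x : R) : R := l * x * (1 - x).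

(* n-step transition probability p^n(x,B) of the Markov chain
   X_{k+1} = lambda_{k+1} X_k (1 - X_k):
   p^0(x,B) = 1_B(x),  p^{n+1}(x,B) = E[ p^n(lambda x (1-x), B) ],
   with lambda ~ Uniform(3.87,4). *)
Fixpoint ptrans {R : realType} (n : nat) (x : R) (B : set R) : \bar R :=
  match n with
  | 0%N => (\1_B x)%:E
  | n'.+1 => (\int[@lam_law R]_l ptrans n' (logistic l x) B)%E
  end.

(* A point y is good if for some n the probability ptrans n y' A is bounded
   below by a positive constant for all y' near y. Points of A are good, and y
   is good as soon as logistic l y is good for some l in the support
   [3.87, 4]: by joint continuity in (l, y), averaging over a short interval of
   parameters near l keeps a positive lower bound. Since 4 is in the support
   and logistic 4 (sin^2 th) = sin^2 (2 th), goodness of sin^2 (2^k th)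
   propagates back to sin^2 th; a th-window of width 2e becomes one of length
   more than 2 pi after k doublings, and there sin^2 takes every value of
   [0, 1]. Hence good points are dense in [0, 1]; in particular some good t has
   t / (x (1 - x)) in the support, which makes x good. *)

From HB Require Import structures.
From mathcomp Require Import all_boot all_order all_algebra.
From mathcomp Require Import all_classical all_reals all_analysis.
From mathcomp Require Import uniform_distribution measurable_realfun ring lra.
Import Order.TTheory GRing.Theory Num.Theory.
Import numFieldNormedType.Exports.
Set Implicit Arguments. Unset Strict Implicit. Unset Printing Implicit Defensive.
Local Open Scope classical_set_scope.
Local Open Scope ring_scope.

(* Monotonicity without measurability, from the definition of the integral of
   a nonnegative function as a supremum over simple minorants: ptrans is not
   known to be measurable in the starting point. *)
Lemma ge0_le_integralT d (T : measurableType d) (R : realType)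
    (mu : {measure set T -> \bar R}) (f g : T -> \bar R) :
  (forall x, 0 <= f x)%E -> (forall x, f x <= g x)%E ->
  (\int[mu]_x f x <= \int[mu]_x g x)%E.
Proof.
move=> f0 fg; have g0 x : (0 <= g x)%E := le_trans (f0 x) (fg x).
rewrite (ge0_integralTE _ f0) (ge0_integralTE _ g0).
apply: ereal_sup_le => _ [h /= hf <-]; exists h => //= x.
exact: le_trans (hf x) (fg x).
Qed.

Lemma uniform_prob_itv (R : realType) (a b : R) (ab : a < b) (c e : R) :
  a <= c -> c < e -> e <= b -> uniform_prob ab `[c, e] = ((e - c) / (b - a))%:E.
Proof.
move=> ac ce eb; rewrite /uniform_prob integral_uniform_pdf.
have cab : `[c, e]%classic `<=` `[a, b]%classic.
  move=> x; rewrite /= !in_itv /= => /andP[cx xe].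
  by rewrite (le_trans ac cx) (le_trans xe eb).
rewrite setIidl // (eq_integral (fun=> ((b - a)^-1)%:E)); last first.
  by move=> x /set_mem /cab; rewrite /= in_itv /uniform_pdf /= => ->.
by rewrite integral_cst //= lebesgue_measure_itv /= lte_fin ce -EFinD -EFinM mulrC.
Qed.

Lemma logistic_continuous (R : realType) : continuous (fun p : R * R => logistic p.1 p.2).
Proof.
move=> p; apply: cvgM; first by apply: cvgM; [exact: cvg_fst | exact: cvg_snd].
by apply: cvgB; [exact: cvg_cst | exact: cvg_snd].
Qed.

Lemma logistic4_sin_sqr (R : realType) (x : R) : logistic 4 (sin x ^+ 2) = sin (2 * x) ^+ 2.
Proof. by rewrite /logistic (mulr_natl x 2) sin_mulr2n -cos2sin2; ring. Qed.

Lemma sin_sqrDnatpi (R : realType) (x : R) (m : nat) : sin (x + m%:R * pi) ^+ 2 = sin x ^+ 2.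
Proof.
elim: m => [|m IH]; first by rewrite mul0r addr0.
by rewrite -natr1 mulrDl mul1r addrA sinDpi sqrrN.
Qed.

Lemma continuous_sin_sqr (R : realType) : continuous (fun x : R => sin x ^+ 2).
Proof. by move=> x; apply: cvgM; exact: continuous_sin. Qed.

Lemma sin_sqr_onto_pihalf (R : realType) (v : R) : 0 <= v <= 1 ->
  exists2 x, 0 <= x <= pi / 2 & sin x ^+ 2 = v.
Proof.
move=> v01; have pi2_ge0 : (0 : R) <= pi / 2 by rewrite divr_ge0 // ltW // pi_gt0.
have cont := continuous_subspaceT (@continuous_sin_sqr R) (A := `[0, pi / 2]).
have [|x] := IVT (v := v) pi2_ge0 cont; last by rewrite in_itv; exists x.
rewrite sin0 sin_pihalf expr0n expr1n /= ge_min le_max.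
by case/andP: v01 => -> ->; rewrite orbT.
Qed.

Lemma sin_sqr_onto (R : realType) (al v : R) : 0 <= al -> 0 <= v <= 1 ->
  exists2 x, al <= x <= al + pi *+ 2 & sin x ^+ 2 = v.
Proof.
move=> al0 /sin_sqr_onto_pihalf[x0 /andP[x00 x0pi] <-].
have pi0 : (0 : R) < pi := pi_gt0 R.
set m := (Num.truncn (al / pi)).+1.
have /andP[lem ltm] := truncn_itv (divr_ge0 al0 (ltW pi0)).
rewrite ler_pdivlMr // in lem; rewrite ltr_pdivrMr // in ltm.
exists (x0 + m%:R * pi); last exact: sin_sqrDnatpi.
by rewrite /m -natr1 mulrDl mul1r in ltm *; apply/andP; split; lra.
Qed.

Section reachability.
Variables (R : realType) (A : set R).

Definition reaches_near (n : nat) (y : R) :=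
  exists2 c : R, 0 < c & \forall y' \near y, (c%:E <= ptrans n y' A)%E.

Definition reaches (y : R) := exists n, reaches_near n y.

Lemma ptrans_ge0 n (y : R) : (0 <= ptrans n y A)%E.
Proof.
elim: n y => [|n IH] y /=; first by rewrite lee_fin indicE.
exact: integral_ge0.
Qed.

Lemma reaches_near_gt0 n y : reaches_near n y -> (0 < ptrans n y A)%E.
Proof. by move=> [c c0 /nbhs_singleton]; apply: lt_le_trans; rewrite lte_fin. Qed.

Lemma reaches_open a : open A -> A a -> reaches a.
Proof.
move=> oA Aa; exists 0%N, 1 => //; near=> y.
rewrite /= indicE mem_set //; near: y; exact: open_nbhs_nbhs.
Unshelve. all: by end_near. Qed.

Lemma reaches_near_logistic n l0 y : lam_lo <= l0 <= lam_hi ->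
  reaches_near n (logistic l0 y) -> reaches_near n.+1 y.
Proof.
move=> /andP[lo_l0 l0_hi] [c c0 near_c].
have /nbhs_ballP[e /= e0 ball_c] := @logistic_continuous R (l0, y) _ near_c.
set a := Num.max lam_lo (l0 - e / 2); set b := Num.min lam_hi (l0 + e / 2).
have lo_a : lam_lo <= a by rewrite le_max lexx.
have b_hi : b <= lam_hi by rewrite ge_min lexx.
have lo_hi : (lam_lo : R) < lam_hi := lam_lo_lt_hi R.
have ab : a < b by rewrite gt_max !lt_min lo_hi /=; apply/and3P; split; lra.
exists (c * ((b - a) / (lam_hi - lam_lo))).
  by rewrite mulr_gt0 // divr_gt0 // subr_gt0.
apply/nbhs_ballP; exists e => // y' yy' /=.
have lam_ab : ((b - a) / (lam_hi - lam_lo))%:E =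
    (\int[@lam_law R]_l (\1_`[a, b] l)%:E)%E.
  by rewrite integral_indic // setIT; exact/esym/uniform_prob_itv.
rewrite EFinM lam_ab -ge0_integralZl //; last 2 first.
- by apply/measurable_EFinP; exact: measurable_indic.
- by rewrite lee_fin ltW.
apply: ge0_le_integralT => l; first by rewrite mule_ge0 // lee_fin ?ltW // indicE.
rewrite indicE; have [/set_mem|_] := boolP (l \in `[a, b]%classic); last first.
  by rewrite mule0 ptrans_ge0.
rewrite /= in_itv /= ge_max le_min mule1 => /andP[/andP[_ al] /andP[_ lb]].
apply: (ball_c (l, y')); split => //=.
by rewrite /ball /= ltr_norml; apply/andP; split; lra.
Qed.

Lemma reaches_logistic l y : lam_lo <= l <= lam_hi -> reaches (logistic l y) -> reaches y.
Proof. by move=> l_lam [n ?]; exists n.+1; exact: reaches_near_logistic l_lam _. Qed.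

Lemma reaches_sin_sqr_halve k x :
  reaches (sin (2 ^+ k * x) ^+ 2) -> reaches (sin x ^+ 2).
Proof.
elim: k x => [|k IH] x; first by rewrite expr0 mul1r.
have lam4 : (lam_lo : R) <= 4 <= (lam_hi : R).
  by apply/andP; split; rewrite /lam_lo /lam_hi; lra.
rewrite [2 ^+ _]exprSr -mulrA => /IH; rewrite -logistic4_sin_sqr; exact: reaches_logistic.
Qed.

Lemma reaches_sin_sqr_near v th e : 0 <= v <= 1 -> reaches v -> 0 < e <= th ->
  exists2 x, `|th - x| < e & reaches (sin x ^+ 2).
Proof.
move=> v01 reach_v /andP[e0 e_th].
have [k] : exists k, pi *+ 2 / e < 2 ^+ k.
  by exists (Num.bound (pi *+ 2 / e)); exact: upper_nthrootP.
set P : R := 2 ^+ k; have P0 : 0 < P by rewrite exprn_gt0.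
rewrite ltr_pdivrMr // => piP.
have al0 : 0 <= P * (th - e / 2) by rewrite mulr_ge0 ?ltW //; lra.
have [z /andP[al_z z_al] sin_z] := sin_sqr_onto al0 v01.
exists (z / P).
  have z_lo : th - e < z / P by rewrite ltr_pdivlMr //; nra.
  have z_hi : z / P < th + e by rewrite ltr_pdivrMr //; nra.
  by rewrite ltr_norml; apply/andP; split; lra.
by apply: (@reaches_sin_sqr_halve k); rewrite mulrCA divff ?gt_eqF // mulr1 sin_z.
Qed.

Lemma reaches_dense v u r : 0 <= v <= 1 -> reaches v -> 0 <= u <= 1 -> 0 < r ->
  exists2 t, `|u - t| < r & reaches t.
Proof.
move=> v01 reach_v /sin_sqr_onto_pihalf[th0 /andP[th0_ge0 _] <-] r0.
have /cvgrPdist_lt/(_ r r0)/nbhs_ballP[d /= d0 near_th] :=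
  @continuous_sin_sqr R (th0 + pi).
(* The shift by pi leaves sin^2 unchanged and makes the centre exceed the radius. *)
have pi_ge2 := pi_ge2 R.
have [|x th_x reach_x] := @reaches_sin_sqr_near v (th0 + pi) (Num.min d 1) v01 reach_v.
  by rewrite lt_min d0 ltr01 /= ge_min; apply/orP; right; lra.
exists (sin x ^+ 2) => //.
have -> : sin th0 ^+ 2 = sin (th0 + pi) ^+ 2 by rewrite sinDpi sqrrN.
by apply: near_th; move: th_x; rewrite /ball /= lt_min => /andP[].
Qed.
End reachability.

Theorem mainTheorem1 (R : realType) (A : set R) :
  open A -> A `<=` `]0, 1[ -> A !=set0 ->
  forall x : R, 0 < x < 1 ->
  exists M : nat, (0 < M)%N /\ (0 < ptrans M x A)%E.
Proof.
move=> oA sA [a Aa] x /andP[x0 x1].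
have a01 : 0 <= a <= 1.
  by move: (sA a Aa); rewrite /= in_itv /= => /andP[? ?]; rewrite !ltW.
set q := x * (1 - x).
have q0 : 0 < q by rewrite mulr_gt0 // subr_gt0.
have q_le : q <= 1 / 4 by have := sqr_ge0 (x - 1 / 2); rewrite /q; nra.
set mid := (lam_lo + lam_hi) / 2 * q; set r := (lam_hi - lam_lo) / 2 * q.
have mid01 : 0 <= mid <= 1 by rewrite /mid /lam_lo /lam_hi; apply/andP; split; nra.
have r0 : 0 < r by rewrite /r /lam_lo /lam_hi; nra.
have [t mid_t [n reach_t]] := reaches_dense a01 (reaches_open oA Aa) mid01 r0.
have lam_t : lam_lo <= t / q <= lam_hi.
  move: mid_t; rewrite ler_pdivlMr // ler_pdivrMr // ltr_norml /mid /r.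
  by case/andP => ? ?; apply/andP; split; lra.
have x_t : logistic (t / q) x = t by rewrite /logistic -mulrA divfK ?gt_eqF.
rewrite -x_t in reach_t.
by exists n.+1; split => //; apply/reaches_near_gt0/(reaches_near_logistic lam_t).
Qed.
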